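(* For every integer $r\ge 1$, \[\frac{b}{4}\,\rho(r)\;\le\; \mathrm{Var}\big(\mu^{(r)}\big)\;\le\; 2b^2\,\rho(r).\]
   Context: Fix an integer $b\ge 2$. Every $n\in\mathbb{N}=\{0,1,2,\dots\}$ has a unique base-$b$ expansion $n=\sum_{k\ge0}n_kb^k$ with digits $n_k\in\{0,\dots,b-1\}$, finitely many nonzero; $s(n):=\sum_k n_k$ is the sum-of-digits function. For $r,n\in\mathbb{N}$ put $\Delta^{(r)}(n):=s(n+r)-s(n)$. For $d\in\mathbb{Z}$, $\mu^{(r)}(d):=\lim_{N\to\infty}\frac1N\big|\{n<N:\Delta^{(r)}(n)=d\}\big|$; these limits exist and $\mu^{(r)}$ is a probability measure on $\mathbb{Z}$ with finite moments of all orders. $\mathrm{Var}(\mu^{(r)})$ denotes its variance. Blocks: write the base-$b$ expansion of $r\ge1$ as the digit string $r_\ell\cdots r_0$ with $r_\ell\neq0$. A block of this string is either a maximal run of consecutive digits equal to $0$ (a block of $0$'s), or a maximal run of consecutive digits equal to $b-1$ (a block of $(b-1)$'s), or, when $b\ge3$, a single digit with value in $\{1,\dots,b-2\}$ (a single-digit block). The digit string is partitioned into its blocks; $\rho(r)$ denotes the number of blocks of $r$. *)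

From Stdlib Require Import Reals Lra Lia ZArith Arith List.
From Coquelicot Require Import Coquelicot.
Import ListNotations.
Open Scope R_scope.

(* Base-b digits of n, least significant first (no trailing zeros; [] for 0).
   The fuel n suffices since n / b < n for b >= 2 and n > 0. *)
Fixpoint digits_aux (b fuel n : nat) : list nat :=
  match fuel with
  | O => []
  | S f => if Nat.eqb n 0 then [] else Nat.modulo n b :: digits_aux b f (Nat.div n b)
  end.

Definition digits (b n : nat) : list nat := digits_aux b n n.

Definition sdig (b n : nat) : nat := fold_right Nat.add 0%nat (digits b n).

Definition Delta (b r n : nat) : Z := (Z.of_nat (sdig b (n + r)) - Z.of_nat (sdig b n))%Z.

Definition cnt (b r : nat) (d : Z) (N : nat) : nat :=
  length (filter (fun n => Z.eqb (Delta b r n) d) (seq 0 N)).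

Definition mu (b r : nat) (d : Z) : R :=
  real (Lim_seq (fun N => INR (cnt b r d N) / INR N)).

Definition sumZ (f : Z -> R) : R :=
  Series (fun k => f (Z.of_nat k)) + Series (fun k => f (- Z.of_nat (S k))%Z).

Definition mean_mu (b r : nat) : R := sumZ (fun d => IZR d * mu b r d).
Definition var_mu (b r : nat) : R :=
  sumZ (fun d => (IZR d - mean_mu b r) ^ 2 * mu b r d).

(* Number of blocks rho(r): count the positions of the digit string where a
   new block starts.  A position starts a block iff it is the first position
   scanned, or its digit is in {1,...,b-2} (single-digit block), or its digit
   differs from the previously scanned digit. *)
Fixpoint block_starts (b : nat) (prev : option nat) (l : list nat) : nat :=
  match l with
  | [] => O
  | d :: t =>
      let new := match prev with
                 | None => true
                 | Some p => orb (andb (Nat.ltb 0 d) (Nat.ltb d (b - 1)))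
                                 (negb (Nat.eqb d p))
                 end in
      ((if new then 1 else 0) + block_starts b (Some d) t)%nat
  end.

Definition rho (b r : nat) : nat := block_starts b None (digits b r).

Example rho_ex1 : rho 10 1900 = 3%nat. Proof. reflexivity. Qed.
Example rho_ex2 : rho 10 5500 = 3%nat. Proof. reflexivity. Qed.
Example rho_ex3 : rho 2 11 = 3%nat. Proof. reflexivity. Qed.
Example sdig_ex : sdig 10 1234 = 10%nat. Proof. reflexivity. Qed.

(* Write n = m + b^K q with m < b^K, where b^K > r.  Then Delta^(r)(n) is
   W(m) := s((m + r) mod b^K) - s(m) if m + r < b^K, and W(m) + 1 - (b - 1) v(q) otherwise,
   where v(q) is the number of trailing digits b - 1 of q.  For uniformly random q, v(q) is
   geometric with P(v = j) = (b - 1) / b^(j+1), so mu^(r) is an average over m of point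
   masses and shifted geometric laws with means W(m).  The W(m) sum to 0, hence mu^(r) is
   centred and Var(mu^(r)) = b^-K (sum_m W(m)^2 + b r).
   Peeling off the lowest digit d of r with an incoming carry c, and putting y = d + c, this
   variance satisfies V(d :: ds, c) = y (b - y) + ((b - y) V(ds, 0) + y V(ds, 1)) / b.  The
   term y (b - y) vanishes only for y in {0, b}, lies in [b - 1, b^2 / 4] otherwise, and the
   weights record which carry the next digit receives; an induction over the digits that
   remembers the previous digit gives (b/4) rho(r) <= V <= (b^2/4 + 1) rho(r) + b. *)

From Pilot Require Import Defs.
From Stdlib Require Import Reals ZArith Arith List Lra Lia.
From Coquelicot Require Import Coquelicot.
Import ListNotations.
Open Scope R_scope.

(** * Digit sums and trailing digits *)

Section Digits.

Variable b : nat.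
Hypothesis Hb : (2 <= b)%nat.

Lemma pow_base_pos K : (0 < b ^ K)%nat.
Proof. apply Nat.neq_0_lt_0, Nat.pow_nonzero. lia. Qed.

Lemma INR_base_ge2 : 2 <= INR b.
Proof. apply (le_INR 2). lia. Qed.

Lemma div_base_lt n : n <> 0%nat -> (n / b < n)%nat.
Proof. intros; apply Nat.div_lt; lia. Qed.

Lemma digit_split n : n = (n mod b + b * (n / b))%nat /\ (n mod b < b)%nat.
Proof. split; [pose proof (Nat.div_mod n b); lia | apply Nat.mod_upper_bound; lia]. Qed.

Lemma digits_aux_fuel f1 f2 n :
  (n <= f1)%nat -> (n <= f2)%nat -> digits_aux b f1 n = digits_aux b f2 n.
Proof.
  revert f2 n; induction f1 as [|f1 IH]; intros [|f2] n H1 H2; simpl;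
    try (replace n with 0%nat by lia; reflexivity).
  destruct (Nat.eqb_spec n 0) as [|Hn]; [reflexivity|].
  pose proof (div_base_lt n Hn). f_equal. apply IH; lia.
Qed.

Lemma digits_unfold n :
  digits b n = if Nat.eqb n 0 then [] else (n mod b)%nat :: digits b (n / b).
Proof.
  unfold digits. destruct n as [|n]; [reflexivity|]. simpl.
  pose proof (div_base_lt (S n) ltac:(lia)).
  f_equal. apply digits_aux_fuel; lia.
Qed.

Lemma sdig_digit u y : (u < b)%nat -> sdig b (u + b * y) = (u + sdig b y)%nat.
Proof.
  intros Hu. unfold sdig at 1. rewrite digits_unfold.
  destruct (Nat.eqb_spec (u + b * y) 0) as [E|E].
  - assert (u = 0%nat /\ y = 0%nat) as [-> ->] by nia. reflexivity.
  - rewrite Nat.mul_comm, Nat.Div0.mod_add, Nat.div_add, Nat.mod_small, Nat.div_small by lia.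
    reflexivity.
Qed.

Lemma sdig_concat K m q : (m < b ^ K)%nat ->
  sdig b (m + b ^ K * q) = (sdig b m + sdig b q)%nat.
Proof.
  revert m; induction K as [|K IH]; intros m Hm.
  - simpl in Hm. replace m with 0%nat by lia. simpl. rewrite Nat.add_0_r. reflexivity.
  - destruct (digit_split m) as [Em Hu]. rewrite Em.
    assert (m / b < b ^ K)%nat by (simpl in Hm; nia).
    replace (m mod b + b * (m / b) + b ^ S K * q)%nat
      with (m mod b + b * (m / b + b ^ K * q))%nat by (simpl; nia).
    rewrite !sdig_digit, IH by auto. lia.
Qed.

Lemma sdig_le n : (sdig b n <= n)%nat.
Proof.
  induction n as [n IH] using (well_founded_induction lt_wf).
  destruct (Nat.eq_dec n 0) as [->|Hn]; [reflexivity|].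
  destruct (digit_split n) as [En Hu]. rewrite En, sdig_digit by auto.
  specialize (IH _ (div_base_lt n Hn)). nia.
Qed.

Fixpoint trailing_max_aux (fuel q : nat) : nat :=
  match fuel with
  | O => O
  | S f => if Nat.eqb (q mod b) (b - 1) then S (trailing_max_aux f (q / b)) else O
  end.

(* The number of trailing digits b - 1 of q, i.e. of carries in q + 1. *)
Definition trailing_max (q : nat) : nat := trailing_max_aux q q.

Lemma trailing_max_aux_fuel f1 f2 q :
  (q <= f1)%nat -> (q <= f2)%nat -> trailing_max_aux f1 q = trailing_max_aux f2 q.
Proof.
  assert (H0 : Nat.eqb (0 mod b) (b - 1) = false)
    by (rewrite Nat.Div0.mod_0_l; apply Nat.eqb_neq; lia).
  revert f2 q; induction f1 as [|f1 IH]; intros [|f2] q H1 H2; simpl;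
    try (replace q with 0%nat by lia; rewrite ?H0; reflexivity).
  destruct (Nat.eqb_spec (q mod b) (b - 1)) as [E|]; [|reflexivity].
  assert (Hq : q <> 0%nat) by (intros ->; rewrite Nat.Div0.mod_0_l in E; lia).
  pose proof (div_base_lt q Hq). f_equal. apply IH; lia.
Qed.

Lemma trailing_max_unfold q :
  trailing_max q = if Nat.eqb (q mod b) (b - 1) then S (trailing_max (q / b)) else O.
Proof.
  unfold trailing_max. destruct q as [|q].
  - simpl. rewrite Nat.Div0.mod_0_l. destruct (Nat.eqb_spec 0 (b - 1)); [lia|reflexivity].
  - simpl trailing_max_aux at 1. destruct (Nat.eqb (S q mod b) (b - 1)); [|reflexivity].
    pose proof (div_base_lt (S q) ltac:(lia)).
    f_equal. apply trailing_max_aux_fuel; lia.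
Qed.

Lemma trailing_max_digit u y : (u < b)%nat ->
  trailing_max (u + b * y) = if Nat.eqb u (b - 1) then S (trailing_max y) else O.
Proof.
  intros Hu. rewrite trailing_max_unfold, Nat.mul_comm, Nat.Div0.mod_add, Nat.div_add,
    Nat.mod_small, Nat.div_small by lia.
  reflexivity.
Qed.

Lemma sdig_succ q : (sdig b (q + 1) + (b - 1) * trailing_max q = sdig b q + 1)%nat.
Proof.
  induction q as [q IH] using (well_founded_induction lt_wf).
  destruct (digit_split q) as [Eq Hu]. rewrite Eq, trailing_max_digit, sdig_digit by auto.
  destruct (Nat.eqb_spec (q mod b) (b - 1)) as [E|E].
  - replace (q mod b + b * (q / b) + 1)%nat with (0 + b * (q / b + 1))%nat by lia.
    rewrite sdig_digit by lia.
    assert (Hq : q <> 0%nat) by (intros ->; rewrite Nat.Div0.mod_0_l in E; lia).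
    specialize (IH _ (div_base_lt q Hq)). lia.
  - replace (q mod b + b * (q / b) + 1)%nat with ((q mod b + 1) + b * (q / b))%nat by lia.
    rewrite sdig_digit by lia. lia.
Qed.

Lemma trailing_max_shift T q :
  ((trailing_max q < T)%nat -> trailing_max (q + b ^ T) = trailing_max q) /\
  ((T <= trailing_max q)%nat -> (T <= trailing_max (q + b ^ T))%nat).
Proof.
  revert q; induction T as [|T IH]; intros q; [split; intros; lia|].
  destruct (digit_split q) as [Eq Hu].
  set (u := (q mod b)%nat) in *; set (y := (q / b)%nat) in *.
  replace (q + b ^ S T)%nat with (u + b * (y + b ^ T))%nat
    by (rewrite Eq, Nat.pow_succ_r'; lia).
  rewrite Eq, !trailing_max_digit by auto.
  destruct (Nat.eqb u (b - 1)); [|split; intros; lia].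
  destruct (IH y) as [I1 I2]. split; intros H; [rewrite I1|specialize (I2 ltac:(lia))]; lia.
Qed.

End Digits.

(** * Finite sums and means of periodic sequences *)

Fixpoint rsum (n : nat) (f : nat -> R) : R :=
  match n with O => 0 | S n => rsum n f + f n end.

Lemma rsum_ext n f g : (forall i, (i < n)%nat -> f i = g i) -> rsum n f = rsum n g.
Proof. induction n; intros H; simpl; [reflexivity|]. rewrite IHn, (H n); auto. Qed.

Lemma rsum_plus n f g : rsum n (fun i => f i + g i) = rsum n f + rsum n g.
Proof. induction n; simpl; [lra|]. rewrite IHn. lra. Qed.

Lemma rsum_scal n c f : rsum n (fun i => c * f i) = c * rsum n f.
Proof. induction n; simpl; [lra|]. rewrite IHn. lra. Qed.

Lemma rsum_const n c : rsum n (fun _ => c) = INR n * c.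
Proof. induction n; simpl rsum; [simpl; lra|]. rewrite IHn, S_INR. lra. Qed.

Lemma rsum_zero n f : (forall i, (i < n)%nat -> f i = 0) -> rsum n f = 0.
Proof. intros H. rewrite (rsum_ext n f (fun _ => 0)), rsum_const by auto. lra. Qed.

Lemma rsum_add n k f : rsum (n + k) f = rsum n f + rsum k (fun i => f (n + i)%nat).
Proof.
  induction k; simpl; [rewrite Nat.add_0_r; lra|].
  rewrite Nat.add_succ_r. simpl. rewrite IHk. lra.
Qed.

Lemma rsum_mul n k f : rsum (n * k) f = rsum k (fun q => rsum n (fun u => f (u + n * q)%nat)).
Proof.
  induction k; simpl; [rewrite Nat.mul_0_r; reflexivity|].
  rewrite Nat.mul_succ_r, rsum_add, IHk. f_equal. apply rsum_ext. intros. f_equal. lia.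
Qed.

Lemma rsum_swap n k f :
  rsum n (fun i => rsum k (fun j => f i j)) = rsum k (fun j => rsum n (fun i => f i j)).
Proof. induction n; simpl; [rewrite rsum_zero; auto|]. rewrite IHn, <- rsum_plus. reflexivity. Qed.

Lemma rsum_le n f g : (forall i, (i < n)%nat -> f i <= g i) -> rsum n f <= rsum n g.
Proof.
  induction n; intros H; simpl; [lra|].
  assert (f n <= g n) by (apply H; lia).
  assert (rsum n f <= rsum n g) by (apply IHn; intros; apply H; lia). lra.
Qed.

Lemma rsum_bounds n f : (forall i, (i < n)%nat -> 0 <= f i <= 1) -> 0 <= rsum n f <= INR n.
Proof.
  intros H. split.
  - rewrite <- (rsum_zero n (fun _ => 0)) by auto. apply rsum_le. intros; apply H; auto.
  - rewrite <- (Rmult_1_r (INR n)), <- rsum_const. apply rsum_le. intros; apply H; auto.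
Qed.

Lemma rsum_rev n f : rsum n (fun i => f (n - 1 - i)%nat) = rsum n f.
Proof.
  revert f; induction n as [|n IH]; intros f; [reflexivity|].
  simpl rsum at 1. replace (S n - 1 - n)%nat with 0%nat by lia.
  rewrite (rsum_ext n _ (fun i => (fun j => f (S j)) (n - 1 - i)%nat)) by (intros; f_equal; lia).
  rewrite (IH (fun j => f (S j))). replace (S n) with (1 + n)%nat by lia.
  rewrite rsum_add. simpl. replace (n - 0 - n)%nat with 0%nat by lia. lra.
Qed.

Lemma sum_n_rsum f n : sum_n f n = rsum (S n) f.
Proof. induction n; [rewrite sum_O; simpl; lra|]. rewrite sum_Sn, IHn. reflexivity. Qed.

Definition b2R (x : bool) : R := if x then 1 else 0.

Lemma b2R_bounds x : 0 <= b2R x <= 1.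
Proof. destruct x; simpl; lra. Qed.

Lemma length_filter_rsum (f : nat -> bool) N :
  INR (length (filter f (seq 0 N))) = rsum N (fun i => b2R (f i)).
Proof.
  induction N; [reflexivity|].
  rewrite seq_S, filter_app, length_app, plus_INR, IHN. simpl. destruct (f N); simpl; lra.
Qed.

Section Periodic.

Variables (f : nat -> R) (P : nat).
Hypothesis HP : (0 < P)%nat.
Hypothesis f_periodic : forall n, f (n + P)%nat = f n.
Hypothesis f_bounds : forall n, 0 <= f n <= 1.

Lemma rsum_periodic q : rsum (q * P) f = INR q * rsum P f.
Proof.
  assert (Hshift : forall k i, f (k * P + i)%nat = f i).
  { intros k i; induction k; [reflexivity|].
    replace (S k * P + i)%nat with ((k * P + i) + P)%nat by lia. rewrite f_periodic. auto. }
  induction q; [simpl; lra|].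
  replace (S q * P)%nat with (q * P + P)%nat by lia.
  rewrite rsum_add, IHq, S_INR, (rsum_ext P (fun i => f (q * P + i)%nat) f) by auto. lra.
Qed.

Lemma periodic_mean_error N : (1 <= N)%nat ->
  Rabs (rsum N f / INR N - rsum P f / INR P) <= INR P * / INR N.
Proof.
  intros HN1.
  assert (HPr : 0 < INR P) by (apply lt_0_INR; lia).
  assert (HNr : 0 < INR N) by (apply lt_0_INR; lia).
  pose proof (Nat.div_mod N P ltac:(lia)) as E.
  assert (Hs : (N mod P < P)%nat) by (apply Nat.mod_upper_bound; lia).
  set (q := (N / P)%nat) in *; set (s := (N mod P)%nat) in *.
  set (S0 := rsum s (fun i => f (q * P + i)%nat)); set (R0 := rsum P f).
  assert (HR : rsum N f = INR q * R0 + S0)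
    by (replace N with (q * P + s)%nat by lia; rewrite rsum_add, rsum_periodic; reflexivity).
  assert (HS0 : 0 <= S0 <= INR s) by (apply rsum_bounds; auto).
  assert (HR0 : 0 <= R0 <= INR P) by (apply rsum_bounds; auto).
  assert (HsP : INR s < INR P) by (apply lt_INR; auto).
  assert (HNq : INR N = INR q * INR P + INR s)
    by (rewrite <- mult_INR, <- plus_INR; f_equal; lia).
  assert (Hd : rsum N f / INR N - R0 / INR P = (S0 * INR P - INR s * R0) / (INR N * INR P))
    by (rewrite HR, HNq; field; lra).
  rewrite Hd, Rabs_div, (Rabs_pos_eq (INR N * INR P)) by nra.
  apply Rle_trans with ((INR P * INR P) / (INR N * INR P)).
  - apply Rmult_le_compat_r; [apply Rlt_le, Rinv_0_lt_compat; nra|].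
    apply Rabs_le. split; nra.
  - right. field. lra.
Qed.

Lemma periodic_mean_lim : is_lim_seq (fun N => rsum N f / INR N) (rsum P f / INR P).
Proof.
  set (c := rsum P f / INR P).
  assert (Hinv : is_lim_seq (fun N => INR P * / INR N) 0).
  { replace (Finite 0) with (Rbar_mult (INR P) 0) by (simpl; f_equal; ring).
    apply is_lim_seq_scal_l. replace (Finite 0) with (Rbar_inv p_infty) by reflexivity.
    apply is_lim_seq_inv; [apply is_lim_seq_INR | discriminate]. }
  apply is_lim_seq_le_le_loc with (fun N => c - INR P * / INR N) (fun N => c + INR P * / INR N).
  - exists 1%nat. intros N HN. apply Rabs_le_between', periodic_mean_error; auto.
  - replace (Finite c) with (Rbar_minus c 0) by (simpl; f_equal; ring).
    apply is_lim_seq_minus'; [apply is_lim_seq_const | exact Hinv].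
  - replace (Finite c) with (Rbar_plus c 0) by (simpl; f_equal; ring).
    apply is_lim_seq_plus'; [apply is_lim_seq_const | exact Hinv].
Qed.

End Periodic.

(** * Series, and sums over Z *)

Lemma is_series_rsum g (l : R) : is_series g l <-> is_lim_seq (fun n => rsum n g) l.
Proof.
  assert (E : forall n, rsum (S n) g = sum_n g n) by (intros; rewrite sum_n_rsum; reflexivity).
  change (is_series g l) with (is_lim_seq (sum_n g) l).
  rewrite (is_lim_seq_incr_1 (fun n => rsum n g)).
  split; apply is_lim_seq_ext; intros n; rewrite E; reflexivity.
Qed.

Lemma is_series_finite u N : (forall k, (N <= k)%nat -> u k = 0) -> is_series u (rsum N u).
Proof.
  intros H. apply is_series_rsum, is_lim_seq_ext_loc with (fun _ => rsum N u);
    [|apply is_lim_seq_const].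
  exists N. intros n Hn. replace n with (N + (n - N))%nat by lia.
  rewrite rsum_add, (rsum_zero (n - N)) by (intros; apply H; lia). lra.
Qed.

Lemma is_series_zero u : (forall k, u k = 0) -> is_series u 0.
Proof. intros H. exact (is_series_finite u 0 (fun k _ => H k)). Qed.

Section Spread.

Variables (u g : nat -> R) (e C : nat).
Hypothesis HC : (1 <= C)%nat.
Hypothesis u_on : forall i, u (e + C * i)%nat = g i.
Hypothesis u_off : forall k, (forall i, k <> (e + C * i)%nat) -> u k = 0.

Lemma u_between i t : (0 < t < C)%nat -> u (e + C * i + t)%nat = 0.
Proof.
  intros Ht. apply u_off. intros i' E.
  destruct (Nat.le_gt_cases i' i);
    [|assert (C * S i <= C * i')%nat by (apply Nat.mul_le_mono_l; lia)]; nia.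
Qed.

Lemma rsum_spread_prefix t i : (t < C)%nat ->
  rsum (e + C * i + S t) u = rsum (e + C * i) u + g i.
Proof.
  intros Ht. replace (S t) with (1 + t)%nat by lia.
  rewrite !rsum_add, (rsum_zero t).
  - simpl. rewrite Nat.add_0_r, u_on. lra.
  - intros k Hk. replace (e + C * i + (1 + k))%nat with (e + C * i + S k)%nat by lia.
    apply u_between. lia.
Qed.

Lemma rsum_spread i : rsum (e + C * i) u = rsum i g.
Proof.
  induction i.
  - rewrite Nat.mul_0_r, Nat.add_0_r. apply rsum_zero. intros k Hk. apply u_off. intros; lia.
  - replace (e + C * S i)%nat with (e + C * i + S (C - 1))%nat by nia.
    rewrite rsum_spread_prefix, IHi by lia. reflexivity.
Qed.

Lemma is_series_spread l : is_series g l -> is_series u l.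
Proof.
  rewrite !is_series_rsum. intros Hg.
  set (J := fun N => if (N <=? e)%nat then 0%nat else ((N - e - 1) / C + 1)%nat).
  apply is_lim_seq_ext with (fun N => rsum (J N) g).
  - intros N. unfold J. destruct (Nat.leb_spec N e) as [E|E].
    + symmetry. apply rsum_zero. intros k Hk. apply u_off. intros i Hi. lia.
    + pose proof (Nat.div_mod (N - e - 1) C ltac:(lia)).
      pose proof (Nat.mod_upper_bound (N - e - 1) C ltac:(lia)).
      replace N with (e + C * ((N - e - 1) / C) + S ((N - e - 1) mod C))%nat at 2 by lia.
      rewrite rsum_spread_prefix, rsum_spread by lia.
      replace ((N - e - 1) / C + 1)%nat with (S ((N - e - 1) / C)) by lia. reflexivity.
  - apply (is_lim_seq_subseq (fun n => rsum n g) l J); auto.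
    intros P [N0 HP]. exists (e + 1 + C * N0)%nat. intros n Hn. apply HP.
    unfold J. destruct (Nat.leb_spec n e); [nia|].
    assert (C * N0 / C <= (n - e - 1) / C)%nat by (apply Nat.Div0.div_le_mono; lia).
    rewrite Nat.mul_comm, Nat.div_mul in H0 by lia. lia.
Qed.

End Spread.

Definition is_sumZ (f : Z -> R) (l : R) : Prop :=
  exists l1 l2, is_series (fun k => f (Z.of_nat k)) l1 /\
    is_series (fun k => f (- Z.of_nat (S k))%Z) l2 /\ l = l1 + l2.

Lemma is_sumZ_unique f l : is_sumZ f l -> sumZ f = l.
Proof.
  intros (l1 & l2 & H1 & H2 & ->). unfold sumZ.
  rewrite (is_series_unique _ _ H1), (is_series_unique _ _ H2). reflexivity.
Qed.

Lemma is_sumZ_ext f g l : (forall d, f d = g d) -> is_sumZ f l -> is_sumZ g l.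
Proof.
  intros E (l1 & l2 & H1 & H2 & ->). exists l1, l2.
  split; [|split; [|reflexivity]]; (eapply is_series_ext; [intros; apply E|]); assumption.
Qed.

Lemma is_sumZ_plus f g lf lg :
  is_sumZ f lf -> is_sumZ g lg -> is_sumZ (fun d => f d + g d) (lf + lg).
Proof.
  intros (l1 & l2 & H1 & H2 & ->) (l3 & l4 & H3 & H4 & ->).
  exists (l1 + l3), (l2 + l4).
  split; [|split; [|lra]]; apply (is_series_plus (V := R_NormedModule)); assumption.
Qed.

Lemma is_sumZ_scal x f l : is_sumZ f l -> is_sumZ (fun d => x * f d) (x * l).
Proof.
  intros (l1 & l2 & H1 & H2 & ->). exists (x * l1), (x * l2).
  split; [|split; [|lra]];
    apply (is_series_scal (K := R_AbsRing) (V := R_NormedModule)); assumption.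
Qed.

Lemma is_sumZ_rsum n (F : nat -> Z -> R) (L : nat -> R) :
  (forall m, (m < n)%nat -> is_sumZ (F m) (L m)) ->
  is_sumZ (fun d => rsum n (fun m => F m d)) (rsum n L).
Proof.
  induction n; intros H.
  - exists 0, 0. split; [|split; [|simpl; lra]]; apply is_series_zero; reflexivity.
  - apply is_sumZ_plus; [apply IHn; intros|]; apply H; lia.
Qed.

(* The function on Z with value h j at a - C j, and 0 off this progression. *)
Definition prog_fun (a : Z) (C : nat) (h : nat -> R) (d : Z) : R :=
  if (Z.leb d a && Z.eqb ((a - d) mod Z.of_nat C) 0)%bool
  then h (Z.to_nat ((a - d) / Z.of_nat C)) else 0.

Section ProgFun.

Variables (a : Z) (C : nat) (h : nat -> R).
Hypothesis HC : (1 <= C)%nat.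

Lemma prog_fun_at j : prog_fun a C h (a - Z.of_nat C * Z.of_nat j)%Z = h j.
Proof.
  unfold prog_fun.
  replace (a - (a - Z.of_nat C * Z.of_nat j))%Z with (Z.of_nat j * Z.of_nat C)%Z by ring.
  rewrite Z.mod_mul, Z.div_mul, Nat2Z.id by lia.
  replace (Z.leb (a - Z.of_nat C * Z.of_nat j) a) with true by (symmetry; apply Z.leb_le; nia).
  reflexivity.
Qed.

Lemma prog_fun_off d : (forall j, d <> (a - Z.of_nat C * Z.of_nat j)%Z) -> prog_fun a C h d = 0.
Proof.
  intros Hd. unfold prog_fun.
  destruct (Z.leb_spec d a), (Z.eqb_spec ((a - d) mod Z.of_nat C) 0) as [E|]; try reflexivity.
  exfalso. pose proof (Z.div_mod (a - d) (Z.of_nat C) ltac:(lia)) as D. rewrite E in D.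
  assert (0 <= (a - d) / Z.of_nat C)%Z by (apply Z.div_pos; lia).
  apply (Hd (Z.to_nat ((a - d) / Z.of_nat C))). rewrite Z2Nat.id; lia.
Qed.

Lemma is_sumZ_prog_fun_neg l : (a < 0)%Z -> is_series h l -> is_sumZ (prog_fun a C h) l.
Proof.
  intros Ha Hh. exists 0, l. split; [|split; [|lra]].
  - apply is_series_zero. intros k. apply prog_fun_off. intros j. lia.
  - apply is_series_spread with (g := h) (e := Z.to_nat (- a - 1)) (C := C); auto.
    + intros i. rewrite <- (prog_fun_at i). f_equal. lia.
    + intros k Hk. apply prog_fun_off. intros j Hj. apply (Hk j). lia.
Qed.

Lemma is_sumZ_prog_fun_nonneg l : (0 <= a)%Z -> is_series h l -> is_sumZ (prog_fun a C h) l.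
Proof.
  intros Ha Hh. set (A := Z.to_nat a). set (j1 := (A / C + 1)%nat).
  assert (HA : a = Z.of_nat A) by (unfold A; lia).
  pose proof (Nat.div_mod A C ltac:(lia)). pose proof (Nat.mod_upper_bound A C ltac:(lia)).
  exists (rsum j1 h), (l - rsum j1 h). split; [|split; [|lra]].
  - set (g := fun i => if (i <? j1)%nat then h (j1 - 1 - i)%nat else 0).
    replace (rsum j1 h) with (rsum j1 g).
    2:{ rewrite <- (rsum_rev j1 g). apply rsum_ext. intros i Hi. unfold g.
        destruct (Nat.ltb_spec (j1 - 1 - i) j1); [f_equal; lia|lia]. }
    apply is_series_spread with (g := g) (e := (A mod C)%nat) (C := C); auto.
    + intros i. unfold g. destruct (Nat.ltb_spec i j1).
      * rewrite <- (prog_fun_at (j1 - 1 - i)). f_equal. unfold j1 in *. nia.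
      * apply prog_fun_off. intros j Hj. unfold j1 in *. nia.
    + intros k Hk. apply prog_fun_off. intros j Hj.
      assert (j <= A / C)%nat by nia. apply (Hk (A / C - j)%nat). nia.
    + apply is_series_finite. intros k Hk. unfold g.
      destruct (Nat.ltb_spec k j1); [lia|reflexivity].
  - assert (Hj1 : (A < C * j1)%nat) by (unfold j1; nia).
    apply is_series_spread
      with (g := fun i => h (j1 + i)%nat) (e := (C * j1 - A - 1)%nat) (C := C); auto.
    + intros i. rewrite <- (prog_fun_at (j1 + i)). f_equal. nia.
    + intros k Hk. apply prog_fun_off. intros j Hj.
      destruct (Nat.lt_ge_cases j j1); [unfold j1 in *; nia|].
      apply (Hk (j - j1)%nat). nia.
    + apply (is_series_incr_n h j1); [unfold j1; lia|].
      rewrite sum_n_rsum. replace (S (pred j1)) with j1 by (unfold j1; lia).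
      match goal with |- is_series _ ?x => replace x with l; [exact Hh|] end.
      cbv [plus AbelianMonoid.plus]. simpl. lra.
Qed.

Lemma is_sumZ_prog_fun l : is_series h l -> is_sumZ (prog_fun a C h) l.
Proof.
  destruct (Z_lt_le_dec a 0); [apply is_sumZ_prog_fun_neg | apply is_sumZ_prog_fun_nonneg]; auto.
Qed.

Lemma prog_fun_mul (G : Z -> R) d :
  G d * prog_fun a C h d = prog_fun a C (fun j => G (a - Z.of_nat C * Z.of_nat j)%Z * h j) d.
Proof.
  unfold prog_fun.
  destruct (Z.leb_spec d a), (Z.eqb_spec ((a - d) mod Z.of_nat C) 0) as [E|]; simpl; try ring.
  pose proof (Z.div_mod (a - d) (Z.of_nat C) ltac:(lia)) as D. rewrite E in D.
  assert (0 <= (a - d) / Z.of_nat C)%Z by (apply Z.div_pos; lia).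
  do 2 f_equal. rewrite Z2Nat.id; lia.
Qed.

End ProgFun.

Lemma is_sumZ_point_mass (G : Z -> R) w : is_sumZ (fun d => G d * b2R (Z.eqb w d)) (G w).
Proof.
  set (delta0 := fun j : nat => b2R (Nat.eqb j 0)).
  apply is_sumZ_ext with (prog_fun w 1 (fun j => G (w - Z.of_nat 1 * Z.of_nat j)%Z * delta0 j)).
  - intros d. rewrite <- prog_fun_mul by lia. f_equal.
    destruct (Z_le_gt_dec d w).
    + replace d with (w - Z.of_nat 1 * Z.of_nat (Z.to_nat (w - d)))%Z by lia.
      rewrite prog_fun_at by lia. unfold delta0.
      repeat match goal with |- context [?x =? ?y] => destruct (Nat.eqb_spec x y) end;
        repeat match goal with |- context [Z.eqb ?x ?y] => destruct (Z.eqb_spec x y) end;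
        reflexivity || lia.
    + rewrite prog_fun_off by (lia || (intros j Hj; lia)).
      destruct (Z.eqb_spec w d); [lia|reflexivity].
  - apply is_sumZ_prog_fun; [lia|].
    replace (G w) with (rsum 1 (fun j => G (w - Z.of_nat 1 * Z.of_nat j)%Z * delta0 j))
      by (simpl; rewrite Z.sub_0_r; unfold delta0; simpl; ring).
    apply is_series_finite. intros [|k] Hk; [lia|]. unfold delta0. simpl. ring.
Qed.

Lemma is_lim_seq_inv_INR_S : is_lim_seq (fun n => / (INR n + 1)) 0.
Proof.
  replace (Finite 0) with (Rbar_inv p_infty) by reflexivity.
  apply is_lim_seq_inv; [|discriminate].
  apply (is_lim_seq_ext (fun n => INR (S n))); [intros; apply S_INR|].
  apply (is_lim_seq_incr_1 INR), is_lim_seq_INR.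
Qed.

Lemma is_lim_seq_sq_geom x : 0 < x < 1 -> is_lim_seq (fun n => (INR n + 1) ^ 2 * x ^ n) 0.
Proof.
  intros Hx. apply ex_series_lim_0, ex_series_Rabs, ex_series_DAlembert with x; [lra| |].
  - intros n. pose proof (pos_INR n).
    apply Rmult_integral_contrapositive_currified; apply pow_nonzero; lra.
  - apply is_lim_seq_ext with (fun n => (1 + / (INR n + 1)) * (1 + / (INR n + 1)) * x).
    + intros n. pose proof (pos_INR n). assert (0 < x ^ n) by (apply pow_lt; lra).
      rewrite S_INR, Rabs_pos_eq.
      * simpl. field. lra.
      * apply Rlt_le, Rdiv_lt_0_compat; apply Rmult_lt_0_compat; apply pow_lt; lra.
    + replace (Finite x) with (Rbar_mult (Rbar_mult (1 + 0) (1 + 0)) x) by (simpl; f_equal; ring).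
      apply is_lim_seq_mult'; [|apply is_lim_seq_const].
      apply is_lim_seq_mult'; apply is_lim_seq_plus';
        try apply is_lim_seq_const; apply is_lim_seq_inv_INR_S.
Qed.

Lemma is_lim_seq_pow_geom x k : 0 < x < 1 -> (k <= 2)%nat ->
  is_lim_seq (fun n => INR n ^ k * x ^ n) 0.
Proof.
  intros Hx Hk.
  apply is_lim_seq_le_le with (fun _ => 0) (fun n => (INR n + 1) ^ 2 * x ^ n);
    [|apply is_lim_seq_const|apply is_lim_seq_sq_geom; auto].
  intros n. pose proof (pos_INR n). assert (0 < x ^ n) by (apply pow_lt; lra).
  assert (0 <= INR n ^ k <= (INR n + 1) ^ 2)
    by (destruct k as [|[|[|k]]]; simpl; nra || lia).
  split; [|apply Rmult_le_compat_r]; nra.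
Qed.

Lemma is_series_telescope F x : is_lim_seq (fun n => F n * x ^ n) 0 ->
  is_series (fun j => F j * x ^ j - F (S j) * x ^ (S j)) (F 0%nat).
Proof.
  intros H. apply is_series_rsum, is_lim_seq_ext with (fun n => F 0%nat - F n * x ^ n).
  - intros n; induction n as [|n IH]; [simpl; ring|]. cbn [rsum]. rewrite <- IH. ring.
  - replace (Finite (F 0%nat)) with (Rbar_minus (F 0%nat) 0) by (simpl; f_equal; lra).
    apply is_lim_seq_minus'; [apply is_lim_seq_const|exact H].
Qed.

Lemma is_series_telescope_quad (al be ga x : R) : 0 < x < 1 ->
  is_series (fun j => (al + be * INR j + ga * INR j ^ 2) * x ^ j
                     - (al + be * INR (S j) + ga * INR (S j) ^ 2) * x ^ (S j)) al.
Proof.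
  intros Hx.
  assert (Hlim : is_lim_seq (fun n => (al + be * INR n + ga * INR n ^ 2) * x ^ n) 0).
  { apply is_lim_seq_ext with (fun n => al * (INR n ^ 0 * x ^ n)
        + (be * (INR n ^ 1 * x ^ n) + ga * (INR n ^ 2 * x ^ n))); [intros; simpl; ring|].
    replace (Finite 0) with (Finite (al * 0 + (be * 0 + ga * 0))) by (f_equal; ring).
    apply is_lim_seq_plus'; [|apply is_lim_seq_plus'];
      apply is_lim_seq_scal_l with (lu := Finite 0); apply is_lim_seq_pow_geom; auto. }
  pose proof (is_series_telescope _ x Hlim) as H. cbv beta in H.
  replace (al + be * INR 0 + ga * INR 0 ^ 2) with al in H by (simpl; ring). exact H.
Qed.

Section Geometric.

Variable b : nat.
Hypothesis Hb : (2 <= b)%nat.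

(* The law of the number j of trailing digits b - 1 of a uniformly random integer. *)
Definition geom_pmf (j : nat) : R := (INR b - 1) / INR b ^ (S j).

Lemma inv_base_bounds : 0 < / INR b < 1.
Proof.
  pose proof (INR_base_ge2 b Hb) as HB.
  split; [apply Rinv_0_lt_compat; lra|].
  apply Rmult_lt_reg_l with (INR b); [lra|]. rewrite Rinv_r; lra.
Qed.

Lemma geom_pmf_telescope (al be ga : R) (F : nat -> R) :
  (forall j, F j * geom_pmf j = (al + be * INR j + ga * INR j ^ 2) * (/ INR b) ^ j
                   - (al + be * INR (S j) + ga * INR (S j) ^ 2) * (/ INR b) ^ (S j)) ->
  is_series (fun j => F j * geom_pmf j) al.
Proof.
  intros E. eapply is_series_ext; [intros j; symmetry; apply E|].
  apply is_series_telescope_quad, inv_base_bounds.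
Qed.

Lemma geom_pmf_mean A :
  is_series (fun j => (A - (INR b - 1) * INR j) * geom_pmf j) (A - 1).
Proof.
  pose proof (INR_base_ge2 b Hb) as HB.
  apply (geom_pmf_telescope _ (- (INR b - 1)) 0). intros j.
  unfold geom_pmf. rewrite S_INR. simpl. rewrite !pow_inv. field.
  split; [apply pow_nonzero|]; lra.
Qed.

Lemma geom_pmf_second_moment A :
  is_series (fun j => (A - (INR b - 1) * INR j) ^ 2 * geom_pmf j) (A ^ 2 - 2 * A + INR b + 1).
Proof.
  pose proof (INR_base_ge2 b Hb) as HB.
  apply (geom_pmf_telescope _ (- 2 * A * (INR b - 1) + 2 * (INR b - 1)) ((INR b - 1) ^ 2)).
  intros j. unfold geom_pmf. rewrite S_INR. simpl. rewrite !pow_inv. field.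
  split; [apply pow_nonzero|]; lra.
Qed.

End Geometric.

(** * The measure mu^(r) as an average of local laws *)

Section LocalLaws.

Variable b : nat.
Hypothesis Hb : (2 <= b)%nat.

Definition low_delta (r K m : nat) : Z :=
  (Z.of_nat (sdig b ((m + r) mod b ^ K)) - Z.of_nat (sdig b m))%Z.
Definition low_carry (r K m : nat) : bool := Nat.leb (b ^ K) (m + r).

Lemma low_delta_bound r K m : (m < b ^ K)%nat ->
  (- Z.of_nat (b ^ K) < low_delta r K m < Z.of_nat (b ^ K))%Z.
Proof.
  intros Hm. unfold low_delta. pose proof (sdig_le b Hb m).
  pose proof (sdig_le b Hb ((m + r) mod b ^ K)).
  pose proof (pow_base_pos b Hb K). pose proof (Nat.mod_upper_bound (m + r) (b ^ K) ltac:(lia)).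
  lia.
Qed.

Lemma Delta_low_high r K m q : (m < b ^ K)%nat -> (r <= b ^ K)%nat ->
  Defs.Delta b r (m + b ^ K * q)%nat =
  (low_delta r K m +
   if low_carry r K m then 1 - Z.of_nat (b - 1) * Z.of_nat (trailing_max b q) else 0)%Z.
Proof.
  intros Hm Hr. unfold Defs.Delta, low_delta, low_carry. rewrite (sdig_concat b Hb K m q Hm).
  pose proof (sdig_succ b Hb q).
  destruct (Nat.leb_spec (b ^ K) (m + r)) as [E|E].
  - assert (Hmod : ((m + r) mod b ^ K = m + r - b ^ K)%nat).
    { replace (m + r)%nat with ((m + r - b ^ K) + 1 * b ^ K)%nat at 1 by lia.
      rewrite Nat.Div0.mod_add. apply Nat.mod_small. lia. }
    rewrite Hmod.
    replace (m + b ^ K * q + r)%nat with ((m + r - b ^ K) + b ^ K * (q + 1))%nat by nia.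
    rewrite (sdig_concat b Hb K) by lia. lia.
  - rewrite Nat.mod_small by lia.
    replace (m + b ^ K * q + r)%nat with ((m + r) + b ^ K * q)%nat by lia.
    rewrite (sdig_concat b Hb K) by lia. lia.
Qed.

(* The law of Delta^(r)(m + b^K q) for fixed m and uniformly random q. *)
Definition local_law (r K m : nat) (d : Z) : R :=
  if low_carry r K m then prog_fun (low_delta r K m + 1) (b - 1) (geom_pmf b) d
  else b2R (Z.eqb (low_delta r K m) d).

Lemma rsum_last (g : nat -> R) x y :
  (forall u, (u < b - 1)%nat -> g u = x) -> g (b - 1)%nat = y ->
  rsum b g = INR (b - 1) * x + y.
Proof.
  intros H1 H2. replace b with ((b - 1) + 1)%nat at 1 by lia.
  rewrite rsum_add, (rsum_ext _ _ (fun _ => x)), rsum_const by auto.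
  simpl. rewrite Nat.add_0_r, H2. lra.
Qed.

Lemma count_trailing_max T j : (j < T)%nat ->
  rsum (b ^ T) (fun q => b2R (Nat.eqb (trailing_max b q) j)) = INR (b ^ T) * geom_pmf b j.
Proof.
  pose proof (INR_base_ge2 b Hb) as HB.
  assert (Hb1 : INR (b - 1) = INR b - 1) by (rewrite minus_INR by lia; simpl; lra).
  assert (Hdigit : forall u y, (u < b)%nat -> trailing_max b (u + b * y) =
            if (u <? b - 1)%nat then O else S (trailing_max b y)).
  { intros u y Hu. rewrite trailing_max_digit by auto.
    destruct (Nat.eqb_spec u (b - 1)), (Nat.ltb_spec u (b - 1)); lia || reflexivity. }
  revert j; induction T as [|T IH]; intros j Hj; [lia|].
  rewrite Nat.pow_succ_r', rsum_mul, mult_INR, pow_INR.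
  destruct j as [|j].
  - rewrite (rsum_ext _ _ (fun _ => INR (b - 1))).
    + rewrite rsum_const, pow_INR. unfold geom_pmf. rewrite Hb1. simpl. field. lra.
    + intros q _. rewrite (rsum_last _ 1 0); [lra| |]; intros;
        rewrite Hdigit by lia; [destruct (Nat.ltb_spec u (b - 1)); [reflexivity|lia]|].
      rewrite Nat.ltb_irrefl. reflexivity.
  - rewrite (rsum_ext _ _ (fun q => b2R (Nat.eqb (trailing_max b q) j))).
    + rewrite IH, pow_INR by lia. unfold geom_pmf. simpl. field. split; [apply pow_nonzero|]; lra.
    + intros q _. rewrite (rsum_last _ 0 (b2R (Nat.eqb (trailing_max b q) j))); [lra| |]; intros;
        rewrite Hdigit by lia; [destruct (Nat.ltb_spec u (b - 1)); [reflexivity|lia]|].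
      rewrite Nat.ltb_irrefl. reflexivity.
Qed.

Lemma IZR_prog (a : Z) (j : nat) :
  IZR (a - Z.of_nat (b - 1) * Z.of_nat j) = IZR a - (INR b - 1) * INR j.
Proof. rewrite minus_IZR, mult_IZR, <- !INR_IZR_INZ, minus_INR by lia. simpl. ring. Qed.

Lemma local_law_mean r K m :
  is_sumZ (fun d => IZR d * local_law r K m d) (IZR (low_delta r K m)).
Proof.
  unfold local_law. destruct (low_carry r K m); [|apply is_sumZ_point_mass].
  eapply is_sumZ_ext; [intros d; symmetry;
    apply (prog_fun_mul (low_delta r K m + 1) (b - 1) (geom_pmf b) ltac:(lia) IZR)|].
  apply is_sumZ_prog_fun; [lia|].
  replace (IZR (low_delta r K m)) with (IZR (low_delta r K m + 1) - 1) by (rewrite plus_IZR; ring).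
  eapply is_series_ext; [|apply (geom_pmf_mean b Hb)].
  intros j. simpl. rewrite IZR_prog. reflexivity.
Qed.

Lemma local_law_second_moment r K m :
  is_sumZ (fun d => IZR d ^ 2 * local_law r K m d)
    (IZR (low_delta r K m) ^ 2 + if low_carry r K m then INR b else 0).
Proof.
  unfold local_law. destruct (low_carry r K m).
  2:{ rewrite Rplus_0_r. apply (is_sumZ_point_mass (fun d => IZR d ^ 2)). }
  eapply is_sumZ_ext;
    [intros d; symmetry; apply (prog_fun_mul (low_delta r K m + 1) (b - 1) (geom_pmf b)
                                  ltac:(lia) (fun d => IZR d ^ 2))|].
  apply is_sumZ_prog_fun; [lia|].
  replace (IZR (low_delta r K m) ^ 2 + INR b) with
    (IZR (low_delta r K m + 1) ^ 2 - 2 * IZR (low_delta r K m + 1) + INR b + 1)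
    by (rewrite plus_IZR; ring).
  eapply is_series_ext; [|apply (geom_pmf_second_moment b Hb)].
  intros j. simpl. rewrite IZR_prog. reflexivity.
Qed.

Lemma rsum_low_delta t K : (t <= b ^ K)%nat ->
  rsum (b ^ K) (fun m => IZR (low_delta t K m)) = 0.
Proof.
  intros Ht. set (s := fun n => INR (sdig b n)).
  rewrite (rsum_ext _ _ (fun m => s ((m + t) mod b ^ K)%nat + (-1) * s m))
    by (intros; unfold low_delta, s; rewrite minus_IZR, <- !INR_IZR_INZ; ring).
  rewrite rsum_plus, rsum_scal.
  replace (rsum (b ^ K) s) with (rsum t s + rsum (b ^ K - t) (fun m => s (t + m)%nat))
    by (rewrite <- rsum_add; f_equal; lia).
  replace (b ^ K)%nat with ((b ^ K - t) + t)%nat at 1 by lia. rewrite rsum_add.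
  rewrite (rsum_ext (b ^ K - t) _ (fun m => s (t + m)%nat)),
    (rsum_ext t _ s); [ring| |].
  - intros i Hi. f_equal. replace (b ^ K - t + i + t)%nat with (i + 1 * b ^ K)%nat by lia.
    rewrite Nat.Div0.mod_add. apply Nat.mod_small. lia.
  - intros i Hi. f_equal. rewrite Nat.mod_small; lia.
Qed.

Section FixedShift.

Variables (r K : nat).
Hypothesis HrK : (r <= b ^ K)%nat.

Lemma Delta_periodic_block d T m q : (m < b ^ K)%nat ->
  (b ^ K + 2 + Z.to_nat (Z.abs d) <= T)%nat ->
  Z.eqb (Defs.Delta b r (m + b ^ K * (q + b ^ T))) d = Z.eqb (Defs.Delta b r (m + b ^ K * q)) d.
Proof.
  intros Hm HT. rewrite !Delta_low_high by auto.
  destruct (low_carry r K m); [|reflexivity].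
  pose proof (low_delta_bound r K m Hm).
  destruct (trailing_max_shift b Hb T q) as [V1 V2].
  destruct (Nat.lt_ge_cases (trailing_max b q) T) as [Hv|Hv]; [rewrite V1 by auto; reflexivity|].
  specialize (V2 Hv).
  repeat match goal with |- context [Z.eqb ?x d] => destruct (Z.eqb_spec x d) end;
    reflexivity || nia.
Qed.

Lemma Delta_periodic d T n : (b ^ K + 2 + Z.to_nat (Z.abs d) <= T)%nat ->
  Z.eqb (Defs.Delta b r (n + b ^ K * b ^ T)) d = Z.eqb (Defs.Delta b r n) d.
Proof.
  intros HT. pose proof (pow_base_pos b Hb K) as HBK.
  pose proof (Nat.div_mod n (b ^ K) ltac:(lia)) as En.
  pose proof (Nat.mod_upper_bound n (b ^ K) ltac:(lia)) as Hm.
  replace (n + b ^ K * b ^ T)%nat with (n mod b ^ K + b ^ K * (n / b ^ K + b ^ T))%nat by nia.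
  rewrite Delta_periodic_block by auto. do 3 f_equal. lia.
Qed.

Lemma rsum_Delta_block d T m : (m < b ^ K)%nat ->
  (b ^ K + 2 + Z.to_nat (Z.abs d) <= T)%nat ->
  rsum (b ^ T) (fun q => b2R (Z.eqb (Defs.Delta b r (m + b ^ K * q)) d))
  = INR (b ^ T) * local_law r K m d.
Proof.
  intros Hm HT. pose proof (low_delta_bound r K m Hm).
  rewrite (rsum_ext _ _ (fun q => b2R (Z.eqb (low_delta r K m +
    if low_carry r K m then 1 - Z.of_nat (b - 1) * Z.of_nat (trailing_max b q) else 0) d)))
    by (intros; rewrite Delta_low_high; auto).
  unfold local_law. destruct (low_carry r K m).
  2:{ rewrite Z.add_0_r, rsum_const, pow_INR. lra. }
  set (a := (low_delta r K m + 1)%Z).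
  set (j := Z.to_nat ((a - d) / Z.of_nat (b - 1))).
  assert (Hprog : forall v, (a - Z.of_nat (b - 1) * Z.of_nat v)%Z = d -> v = j).
  { intros v Hv. unfold j. rewrite <- Hv.
    replace (a - (a - Z.of_nat (b - 1) * Z.of_nat v))%Z
      with (Z.of_nat v * Z.of_nat (b - 1))%Z by ring.
    rewrite Z.div_mul, Nat2Z.id by lia. reflexivity. }
  assert (Hterm : forall v, (low_delta r K m + (1 - Z.of_nat (b - 1) * Z.of_nat v))%Z
                            = (a - Z.of_nat (b - 1) * Z.of_nat v)%Z) by (intros; unfold a; ring).
  destruct (Z.eq_dec (a - Z.of_nat (b - 1) * Z.of_nat j) d) as [Ed|Ed].
  - rewrite <- Ed, prog_fun_at, <- (count_trailing_max T j) by (unfold a in Ed; nia).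
    apply rsum_ext. intros q _. rewrite Hterm, Ed. f_equal.
    destruct (Z.eqb_spec (a - Z.of_nat (b - 1) * Z.of_nat (trailing_max b q)) d) as [E|E],
      (Nat.eqb_spec (trailing_max b q) j) as [E'|E']; auto.
    + exfalso. apply E', Hprog, E.
    + exfalso. apply E. rewrite E'. exact Ed.
  - rewrite prog_fun_off by (lia || (intros v Hv; apply Ed; rewrite <- (Hprog v); auto)).
    rewrite Rmult_0_r. apply rsum_zero. intros q _. rewrite Hterm.
    destruct (Z.eqb_spec (a - Z.of_nat (b - 1) * Z.of_nat (trailing_max b q)) d) as [E|E];
      [|reflexivity].
    exfalso. apply Ed. rewrite <- (Hprog _ E). exact E.
Qed.

Lemma mu_local_laws d : mu b r d = / INR (b ^ K) * rsum (b ^ K) (fun m => local_law r K m d).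
Proof.
  pose proof (pow_base_pos b Hb K) as HBK.
  set (T := (b ^ K + 2 + Z.to_nat (Z.abs d))%nat).
  pose proof (pow_base_pos b Hb T) as HBT.
  set (f := fun n => b2R (Z.eqb (Defs.Delta b r n) d)).
  assert (Hper : forall n, f (n + b ^ K * b ^ T)%nat = f n)
    by (intros; unfold f; rewrite Delta_periodic by (unfold T; lia); reflexivity).
  pose proof (periodic_mean_lim f (b ^ K * b ^ T) ltac:(nia) Hper (fun n => b2R_bounds _)) as Hlim.
  unfold mu. rewrite (Lim_seq_ext _ (fun N => rsum N f / INR N))
    by (intros; unfold cnt; rewrite length_filter_rsum; reflexivity).
  rewrite (is_lim_seq_unique _ _ Hlim). simpl.
  rewrite rsum_mul, rsum_swap, (rsum_ext (b ^ K) _ (fun m => INR (b ^ T) * local_law r K m d)).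
  - rewrite rsum_scal, mult_INR. field. split; apply not_0_INR; lia.
  - intros m Hm. apply rsum_Delta_block; auto.
Qed.

Lemma rsum_low_carry x :
  rsum (b ^ K) (fun m => if low_carry r K m then x else 0) = INR r * x.
Proof.
  replace (b ^ K)%nat with ((b ^ K - r) + r)%nat at 1 by lia.
  rewrite rsum_add, rsum_zero, (rsum_ext _ _ (fun _ => x)), rsum_const; [ring| |];
    intros i Hi; unfold low_carry; [destruct (Nat.leb_spec (b ^ K) (b ^ K - r + i + r))
                                   |destruct (Nat.leb_spec (b ^ K) (i + r))]; lia || reflexivity.
Qed.

Lemma mean_mu_zero : mean_mu b r = 0.
Proof.
  pose proof (pow_base_pos b Hb K) as HBK.
  unfold mean_mu. apply is_sumZ_unique.
  apply (is_sumZ_ext (fun d => / INR (b ^ K) * rsum (b ^ K) (fun m => IZR d * local_law r K m d)));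
    [intros; rewrite mu_local_laws, rsum_scal; ring|].
  replace 0 with (/ INR (b ^ K) * rsum (b ^ K) (fun m => IZR (low_delta r K m)))
    by (rewrite rsum_low_delta by auto; ring).
  apply is_sumZ_scal, is_sumZ_rsum. intros; apply local_law_mean.
Qed.

Lemma var_mu_low_delta :
  var_mu b r = / INR (b ^ K) * rsum (b ^ K) (fun m => IZR (low_delta r K m) ^ 2)
               + INR b * INR r / INR (b ^ K).
Proof.
  assert (HBK : 0 < INR (b ^ K)) by (apply lt_0_INR, pow_base_pos, Hb).
  unfold var_mu. rewrite mean_mu_zero. apply is_sumZ_unique.
  apply (is_sumZ_ext
    (fun d => / INR (b ^ K) * rsum (b ^ K) (fun m => IZR d ^ 2 * local_law r K m d)));
    [intros; rewrite mu_local_laws, rsum_scal; ring|].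
  replace (_ + INR b * INR r / INR (b ^ K)) with (/ INR (b ^ K) * rsum (b ^ K)
      (fun m => IZR (low_delta r K m) ^ 2 + if low_carry r K m then INR b else 0))
    by (rewrite rsum_plus, rsum_low_carry; field; lra).
  apply is_sumZ_scal, is_sumZ_rsum. intros; apply local_law_second_moment.
Qed.

End FixedShift.

End LocalLaws.

(** * The variance as a recursion over the digits of r *)

Fixpoint digits_val (b : nat) (ds : list nat) : nat :=
  match ds with [] => 0%nat | d :: ds' => (d + b * digits_val b ds')%nat end.

(* For a carry c in {0, 1}, var_digits b ds c = Var(mu^(t)) with t = digits_val b ds + c
   (sq_low_delta_var_digits and var_mu_low_delta). *)
Fixpoint var_digits (b : nat) (ds : list nat) (c : nat) : R :=
  match ds with
  | [] => INR b * INR c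
  | d :: ds' => INR (d + c) * INR (b - (d + c)) +
      (INR (b - (d + c)) * var_digits b ds' 0 + INR (d + c) * var_digits b ds' 1) / INR b
  end.

Section Recursion.

Variable b : nat.
Hypothesis Hb : (2 <= b)%nat.

Lemma digits_spec n :
  List.Forall (fun d => (d < b)%nat) (digits b n) /\ digits_val b (digits b n) = n.
Proof.
  induction n as [n IH] using (well_founded_induction lt_wf).
  rewrite (digits_unfold b Hb). destruct (Nat.eqb_spec n 0) as [->|E]; [split; auto|].
  destruct (IH _ (div_base_lt b Hb n E)) as [H1 H2]. destruct (digit_split b Hb n).
  split; [constructor; auto|]. simpl. rewrite H2. lia.
Qed.

Lemma digits_val_lt ds :
  List.Forall (fun d => (d < b)%nat) ds -> (digits_val b ds < b ^ length ds)%nat.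
Proof. induction 1; simpl; nia. Qed.

Definition carry_out (x u : nat) : nat := if (u + x <? b)%nat then 0%nat else 1%nat.

Lemma mod_pow_digit K u y : (u < b)%nat ->
  ((u + b * y) mod b ^ S K = u + b * (y mod b ^ K))%nat.
Proof.
  intros Hu. pose proof (pow_base_pos b Hb K).
  pose proof (Nat.div_mod y (b ^ K) ltac:(lia)).
  pose proof (Nat.mod_upper_bound y (b ^ K) ltac:(lia)).
  replace (u + b * y)%nat with ((u + b * (y mod b ^ K)) + (y / b ^ K) * b ^ S K)%nat
    by (simpl; nia).
  rewrite Nat.Div0.mod_add. apply Nat.mod_small. simpl. nia.
Qed.

Lemma low_delta_digit K x t u m : (u < b)%nat -> (x <= b)%nat ->
  IZR (low_delta b (x + b * t) (S K) (u + b * m)) =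
  INR x - INR b * INR (carry_out x u) + IZR (low_delta b (t + carry_out x u) K m).
Proof.
  intros Hu Hx. unfold low_delta, carry_out. rewrite (sdig_digit b Hb u m Hu).
  destruct (Nat.ltb_spec (u + x) b).
  - replace (u + b * m + (x + b * t))%nat with ((u + x) + b * (m + t))%nat by lia.
    rewrite mod_pow_digit, sdig_digit, Nat.add_0_r by auto.
    rewrite !minus_IZR, <- !INR_IZR_INZ, !plus_INR. simpl. ring.
  - replace (u + b * m + (x + b * t))%nat with ((u + x - b) + b * (m + (t + 1)))%nat by lia.
    rewrite mod_pow_digit, sdig_digit by lia.
    rewrite !minus_IZR, <- !INR_IZR_INZ, !plus_INR, minus_INR by lia. rewrite plus_INR. simpl. ring.
Qed.

Definition sq_low_delta (t K : nat) : R := rsum (b ^ K) (fun m => IZR (low_delta b t K m) ^ 2).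

Lemma rsum_sq_shifted_low_delta t K y : (t <= b ^ K)%nat ->
  rsum (b ^ K) (fun m => (y + IZR (low_delta b t K m)) ^ 2)
  = INR (b ^ K) * y ^ 2 + sq_low_delta t K.
Proof.
  intros Ht. unfold sq_low_delta.
  rewrite (rsum_ext _ _ (fun m => y ^ 2 +
      ((2 * y) * IZR (low_delta b t K m) + IZR (low_delta b t K m) ^ 2))) by (intros; ring).
  rewrite rsum_plus, rsum_const, rsum_plus, rsum_scal, rsum_low_delta by auto. ring.
Qed.

Lemma sq_low_delta_digit K x t : (x <= b)%nat -> (t < b ^ K)%nat ->
  sq_low_delta (x + b * t) (S K) =
  INR (b - x) * (INR (b ^ K) * INR x ^ 2 + sq_low_delta t K) +
  INR x * (INR (b ^ K) * (INR x - INR b) ^ 2 + sq_low_delta (t + 1) K).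
Proof.
  intros Hx Ht. unfold sq_low_delta at 1.
  rewrite Nat.pow_succ_r', rsum_mul.
  rewrite (rsum_ext _ _ (fun m => rsum b (fun u =>
     (INR x - INR b * INR (carry_out x u) + IZR (low_delta b (t + carry_out x u) K m)) ^ 2)))
    by (intros m Hm; apply rsum_ext; intros u Hu; rewrite low_delta_digit; auto).
  rewrite rsum_swap. replace b with ((b - x) + x)%nat at 1 by lia. rewrite rsum_add.
  rewrite (rsum_ext (b - x) _ (fun _ => INR (b ^ K) * INR x ^ 2 + sq_low_delta t K)),
    (rsum_ext x _ (fun _ => INR (b ^ K) * (INR x - INR b) ^ 2 + sq_low_delta (t + 1) K)),
    !rsum_const; [ring| |].
  - intros u Hu. unfold carry_out. destruct (Nat.ltb_spec (b - x + u + x) b); [lia|].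
    rewrite <- rsum_sq_shifted_low_delta by lia. apply rsum_ext. intros. simpl INR. ring.
  - intros v Hv. unfold carry_out. destruct (Nat.ltb_spec (v + x) b); [|lia].
    rewrite <- rsum_sq_shifted_low_delta, Nat.add_0_r by lia.
    apply rsum_ext. intros. simpl INR. ring.
Qed.

Lemma sq_low_delta_var_digits ds c : List.Forall (fun d => (d < b)%nat) ds -> (c <= 1)%nat ->
  sq_low_delta (digits_val b ds + c) (length ds) + INR b * INR (digits_val b ds + c)
  = INR (b ^ length ds) * var_digits b ds c.
Proof.
  pose proof (INR_base_ge2 b Hb).
  intros Hds; revert c; induction Hds as [|d ds Hd Hds IH]; intros c Hc.
  - unfold sq_low_delta. simpl.
    replace (low_delta b c 0 0) with 0%Z
      by (unfold low_delta; rewrite Nat.pow_0_r, Nat.mod_1_r; reflexivity).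
    simpl. ring.
  - pose proof (digits_val_lt ds Hds).
    pose proof (IH 0%nat ltac:(lia)) as I0. pose proof (IH 1%nat ltac:(lia)) as I1.
    rewrite Nat.add_0_r in I0.
    cbn [length digits_val var_digits].
    replace (d + b * digits_val b ds + c)%nat with ((d + c) + b * digits_val b ds)%nat by lia.
    rewrite sq_low_delta_digit by lia. rewrite Nat.pow_succ_r', mult_INR.
    replace (sq_low_delta (digits_val b ds) (length ds))
      with (INR (b ^ length ds) * var_digits b ds 0 - INR b * INR (digits_val b ds)) by lra.
    replace (sq_low_delta (digits_val b ds + 1) (length ds))
      with (INR (b ^ length ds) * var_digits b ds 1 - INR b * INR (digits_val b ds + 1)) by lra.
    rewrite minus_INR by lia. rewrite !plus_INR, mult_INR. simpl INR. field. lra.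
Qed.

Lemma var_mu_var_digits r : var_mu b r = var_digits b (digits b r) 0.
Proof.
  destruct (digits_spec r) as [Hds Hval].
  set (K := length (digits b r)).
  assert (HrK : (r < b ^ K)%nat) by (rewrite <- Hval at 1; apply digits_val_lt; auto).
  assert (HBK : 0 < INR (b ^ K)) by (apply lt_0_INR, pow_base_pos; auto).
  pose proof (sq_low_delta_var_digits (digits b r) 0 Hds ltac:(lia)) as Q.
  rewrite Nat.add_0_r, Hval in Q. fold K in Q.
  rewrite (var_mu_low_delta b Hb r K) by lia. fold (sq_low_delta r K).
  apply Rmult_eq_reg_l with (INR (b ^ K)); [|lra].
  rewrite <- Q. field. lra.
Qed.

End Recursion.

(** * Bounds by the number of blocks *)

Section Blocks.

Variable b : nat.
Hypothesis Hb : (2 <= b)%nat.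

Definition starts_block (prev : option nat) (d : nat) : bool :=
  match prev with
  | None => true
  | Some p => orb (andb (Nat.ltb 0 d) (Nat.ltb d (b - 1))) (negb (Nat.eqb d p))
  end.

Lemma block_starts_cons prev d t :
  block_starts b prev (d :: t)
  = ((if starts_block prev d then 1 else 0) + block_starts b (Some d) t)%nat.
Proof. reflexivity. Qed.

Fixpoint last_nonzero (ds : list nat) : Prop :=
  match ds with
  | [] => True
  | [d] => d <> 0%nat
  | _ :: t => last_nonzero t
  end.

Lemma last_nonzero_tail d ds : last_nonzero (d :: ds) -> last_nonzero ds.
Proof. destruct ds; simpl; auto. Qed.

Lemma digits_last_nonzero n : last_nonzero (digits b n).
Proof.
  induction n as [n IH] using (well_founded_induction lt_wf).
  rewrite (digits_unfold b Hb). destruct (Nat.eqb_spec n 0) as [|E]; [exact I|].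
  specialize (IH _ (div_base_lt b Hb n E)). rewrite (digits_unfold b Hb) in *.
  destruct (Nat.eqb_spec (n / b) 0) as [E'|]; [|exact IH].
  destruct (digit_split b Hb n). simpl. lia.
Qed.

Definition differs_from (prev : option nat) (x : nat) : R :=
  match prev with Some p => if Nat.eqb p x then 0 else 1 | None => 1 end.

Lemma differs_from_bounds prev x : 0 <= differs_from prev x <= 1.
Proof. destruct prev; simpl; [destruct (Nat.eqb _ _)|]; lra. Qed.

Lemma starts_block_0 prev : INR (if starts_block prev 0 then 1 else 0) = differs_from prev 0.
Proof. destruct prev as [[|p]|]; reflexivity. Qed.

Lemma starts_block_max prev :
  INR (if starts_block prev (b - 1) then 1 else 0) = differs_from prev (b - 1).
Proof.
  destruct prev as [p|]; simpl; [|reflexivity].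
  rewrite Nat.ltb_irrefl, Bool.andb_false_r, Nat.eqb_sym. destruct (Nat.eqb p (b - 1)); reflexivity.
Qed.

Lemma starts_block_middle prev d : (0 < d < b - 1)%nat -> starts_block prev d = true.
Proof.
  intros Hd. destruct prev; simpl; [|reflexivity].
  destruct (Nat.ltb_spec 0 d), (Nat.ltb_spec d (b - 1)); [reflexivity|lia..].
Qed.

Lemma digit_cases d : (d < b)%nat -> d = 0%nat \/ d = (b - 1)%nat \/ (0 < d < b - 1)%nat.
Proof. lia. Qed.

Lemma INR_digit_carry d c : (d < b)%nat -> (c <= 1)%nat ->
  INR (b - (d + c)) = INR b - INR (d + c) /\ 0 <= INR (d + c) <= INR b.
Proof.
  intros Hd Hc. assert (d + c <= b)%nat by lia.
  split; [apply minus_INR; lia | split; [apply pos_INR | apply le_INR; lia]].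
Qed.

Lemma var_digits_cons d ds c : (d < b)%nat -> (c <= 1)%nat ->
  var_digits b (d :: ds) c = INR (d + c) * (INR b - INR (d + c)) +
    ((INR b - INR (d + c)) * var_digits b ds 0 + INR (d + c) * var_digits b ds 1) / INR b.
Proof.
  intros Hd Hc. cbn [var_digits]. rewrite (proj1 (INR_digit_carry d c Hd Hc)). reflexivity.
Qed.

Lemma carry_average (B y L0 L1 G0 G1 : R) : 0 < B -> 0 <= y <= B -> L0 <= G0 -> L1 <= G1 ->
  ((B - y) * L0 + y * L1) / B <= ((B - y) * G0 + y * G1) / B.
Proof.
  intros. apply Rmult_le_compat_r; [apply Rlt_le, Rinv_0_lt_compat; lra|].
  apply Rplus_le_compat; apply Rmult_le_compat_l; lra.
Qed.

(* 1 when the first digit starts a block but, with the carry c, has y (b - y) = 0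
   (and for the empty list without carry). *)
Definition lower_slack (prev : option nat) (ds : list nat) (c : nat) : R :=
  match ds with
  | [] => if Nat.eqb c 0 then 1 else 0
  | d :: _ => if (Nat.eqb d 0 && Nat.eqb c 0)%bool then differs_from prev 0
              else if (Nat.eqb d (b - 1) && Nat.eqb c 1)%bool then differs_from prev (b - 1) else 0
  end.

Lemma lower_slack_bounds prev ds c : 0 <= lower_slack prev ds c <= 1.
Proof.
  destruct ds; simpl; [destruct (Nat.eqb c 0); lra|].
  repeat destruct (_ && _)%bool; try apply differs_from_bounds. lra.
Qed.

Lemma lower_step prev d ds c : (d < b)%nat -> (c <= 1)%nat -> last_nonzero (d :: ds) ->
  INR b / 4 * (INR (if starts_block prev d then 1 else 0) - lower_slack prev (d :: ds) c)
  + ((INR b - INR (d + c)) * lower_slack (Some d) ds 0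
     + INR (d + c) * lower_slack (Some d) ds 1) / 4
  <= INR (d + c) * (INR b - INR (d + c)).
Proof.
  intros Hd Hc Hnz. pose proof (INR_base_ge2 b Hb) as HB.
  pose proof (lower_slack_bounds (Some d) ds 0). pose proof (lower_slack_bounds (Some d) ds 1).
  destruct (digit_cases d Hd) as [->|[->|Hmid]].
  - rewrite starts_block_0.
    replace (lower_slack (Some 0%nat) ds 0) with 0
      by (destruct ds as [|e ds]; [simpl in Hnz; lia|]; simpl;
          destruct (Nat.eqb e 0); [reflexivity|rewrite Bool.andb_false_r; reflexivity]).
    pose proof (differs_from_bounds prev 0).
    destruct c as [|[|]]; [| |lia].
    + simpl. lra.
    + replace (lower_slack prev (0%nat :: ds) 1) with 0
        by (simpl; destruct (b - 1)%nat eqn:E; [lia|reflexivity]).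
      simpl INR. nra.
  - rewrite starts_block_max.
    replace (lower_slack (Some (b - 1)%nat) ds 1) with 0
      by (destruct ds as [|e ds]; [reflexivity|]; simpl; rewrite Bool.andb_false_r, Nat.eqb_refl,
          Bool.andb_true_r; destruct (Nat.eqb e (b - 1)); reflexivity).
    pose proof (differs_from_bounds prev (b - 1)).
    destruct c as [|[|]]; [| |lia]; simpl lower_slack;
      destruct (Nat.eqb_spec (b - 1) 0); try lia; rewrite ?Nat.eqb_refl; simpl.
    + rewrite Nat.add_0_r, minus_INR by lia. simpl INR. nra.
    + replace (b - 1 + 1)%nat with b by lia. nra.
  - rewrite starts_block_middle by auto.
    replace (lower_slack prev (d :: ds) c) with 0
      by (simpl; destruct (Nat.eqb_spec d 0), (Nat.eqb_spec d (b - 1)); reflexivity || lia).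
    assert (1 <= INR (d + c) <= INR b - 1).
    { replace (INR b - 1) with (INR (b - 1)) by (rewrite minus_INR by lia; reflexivity).
      split; [apply (le_INR 1) | apply le_INR]; lia. }
    simpl INR. nra.
Qed.

Lemma var_digits_lower ds : List.Forall (fun d => (d < b)%nat) ds -> last_nonzero ds ->
  forall prev c, (c <= 1)%nat ->
  INR b / 4 * (INR (block_starts b prev ds) + 1 - lower_slack prev ds c) <= var_digits b ds c.
Proof.
  pose proof (INR_base_ge2 b Hb) as HB.
  induction 1 as [|d ds Hd Hds IH]; intros Hnz prev c Hc.
  - destruct c as [|[|]]; simpl; lra || lia.
  - pose proof (IH (last_nonzero_tail d ds Hnz) (Some d) 0%nat ltac:(lia)) as I0.
    pose proof (IH (last_nonzero_tail d ds Hnz) (Some d) 1%nat ltac:(lia)) as I1.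
    pose proof (carry_average (INR b) _ _ _ _ _ ltac:(lra)
                  (proj2 (INR_digit_carry d c Hd Hc)) I0 I1).
    pose proof (lower_step prev d ds c Hd Hc Hnz).
    rewrite var_digits_cons, block_starts_cons by auto.
    set (y := INR (d + c)) in *. rewrite plus_INR.
    set (S := INR (block_starts b (Some d) ds)) in *.
    assert (((INR b - y) * (INR b / 4 * (S + 1 - lower_slack (Some d) ds 0))
             + y * (INR b / 4 * (S + 1 - lower_slack (Some d) ds 1))) / INR b
            = INR b / 4 * (S + 1)
              - ((INR b - y) * lower_slack (Some d) ds 0 + y * lower_slack (Some d) ds 1) / 4)
      by (field; lra).
    lra.
Qed.

(* Slack for a carry c into a digit whose predecessor is 0 with c = 1, or b - 1 with
   c = 0: the digit may then contribute to var_digits without starting a block. *)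
Definition upper_slack (prev : option nat) (c : nat) : R :=
  match prev with
  | Some p => if (Nat.eqb p 0 && Nat.eqb c 1)%bool then 1
              else if (Nat.eqb p (b - 1) && Nat.eqb c 0)%bool then 1 else 0
  | None => 0
  end.

Lemma upper_slack_bounds prev c : 0 <= upper_slack prev c <= 1.
Proof. destruct prev; simpl; repeat destruct (_ && _)%bool; lra. Qed.

Lemma upper_step prev d c : (d < b)%nat -> (c <= 1)%nat ->
  INR (d + c) * (INR b - INR (d + c))
  + (INR b - INR (d + c)) * upper_slack (Some d) 0 + INR (d + c) * upper_slack (Some d) 1
  <= (INR b ^ 2 / 4 + 1) * INR (if starts_block prev d then 1 else 0) + INR b * upper_slack prev c.
Proof.
  intros Hd Hc. pose proof (INR_base_ge2 b Hb) as HB.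
  pose proof (upper_slack_bounds prev c).
  assert (forall y, y * (INR b - y) <= INR b ^ 2 / 4)
    by (intros y; pose proof (pow2_ge_0 (INR b - 2 * y)); nra).
  destruct (digit_cases d Hd) as [->|[->|Hmid]].
  - rewrite starts_block_0. pose proof (differs_from_bounds prev 0).
    replace (upper_slack (Some 0%nat) 0) with 0
      by (simpl; destruct (b - 1)%nat eqn:E; [lia|reflexivity]).
    destruct c as [|[|]]; [| |lia]; simpl INR; simpl upper_slack; [nra|].
    destruct prev as [[|p]|]; simpl in *; nra.
  - rewrite starts_block_max. pose proof (differs_from_bounds prev (b - 1)).
    simpl upper_slack. destruct (Nat.eqb_spec (b - 1) 0); [lia|]. rewrite Nat.eqb_refl. simpl.
    destruct c as [|[|]]; [| |lia].
    + rewrite Nat.add_0_r, minus_INR by lia. simpl INR.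
      destruct prev as [p|]; simpl in *; [|nra].
      destruct (Nat.eqb_spec p (b - 1)) as [->|]; [|nra].
      destruct (Nat.eqb_spec (b - 1) 0); [lia|]. simpl. nra.
    + replace (b - 1 + 1)%nat with b by lia. nra.
  - rewrite starts_block_middle by auto.
    simpl upper_slack. destruct (Nat.eqb_spec d 0), (Nat.eqb_spec d (b - 1)); try lia. simpl.
    specialize (H0 (INR (d + c))). simpl pow in H0. simpl INR. nra.
Qed.

Lemma var_digits_upper ds : List.Forall (fun d => (d < b)%nat) ds ->
  forall prev c, (c <= 1)%nat ->
  var_digits b ds c
  <= (INR b ^ 2 / 4 + 1) * INR (block_starts b prev ds) + INR b + INR b * upper_slack prev c.
Proof.
  pose proof (INR_base_ge2 b Hb) as HB.
  induction 1 as [|d ds Hd Hds IH]; intros prev c Hc.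
  - pose proof (upper_slack_bounds prev c). destruct c as [|[|]]; simpl; nra || lia.
  - pose proof (IH (Some d) 0%nat ltac:(lia)) as I0.
    pose proof (IH (Some d) 1%nat ltac:(lia)) as I1.
    pose proof (carry_average (INR b) _ _ _ _ _ ltac:(lra)
                  (proj2 (INR_digit_carry d c Hd Hc)) I0 I1).
    pose proof (upper_step prev d c Hd Hc).
    rewrite var_digits_cons, block_starts_cons by auto.
    set (y := INR (d + c)) in *. rewrite plus_INR.
    set (S := INR (block_starts b (Some d) ds)) in *.
    set (A := INR b ^ 2 / 4 + 1) in *.
    assert (((INR b - y) * (A * S + INR b + INR b * upper_slack (Some d) 0)
             + y * (A * S + INR b + INR b * upper_slack (Some d) 1)) / INR b
            = A * S + INR b + (INR b - y) * upper_slack (Some d) 0 + y * upper_slack (Some d) 1)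
      by (field; lra).
    lra.
Qed.

End Blocks.

Lemma rho_ge1 b r : (2 <= b)%nat -> (1 <= r)%nat -> 1 <= INR (rho b r).
Proof.
  intros Hb Hr. unfold rho. rewrite (digits_unfold b Hb).
  destruct (Nat.eqb_spec r 0) as [|_]; [lia|].
  rewrite block_starts_cons, plus_INR. simpl.
  pose proof (pos_INR (block_starts b (Some (r mod b)) (digits b (r / b)))). lra.
Qed.

Theorem theorem1 (b r : nat) (Hb : (2 <= b)%nat) (Hr : (1 <= r)%nat) :
  INR b / 4 * INR (rho b r) <= var_mu b r <= 2 * INR b ^ 2 * INR (rho b r).
Proof.
  pose proof (INR_base_ge2 b Hb) as HB.
  pose proof (rho_ge1 b r Hb Hr) as Hrho.
  destruct (digits_spec b Hb r) as [Hds _].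
  rewrite var_mu_var_digits by auto. unfold rho in *.
  split.
  - pose proof (var_digits_lower b Hb _ Hds (digits_last_nonzero b Hb r) None 0%nat ltac:(lia)).
    pose proof (lower_slack_bounds b None (digits b r) 0). nra.
  - pose proof (var_digits_upper b Hb _ Hds None 0%nat ltac:(lia)) as U. simpl upper_slack in U.
    set (rh := INR (block_starts b None (digits b r))) in *.
    assert (0 <= (7 / 4 * INR b ^ 2 - 1) * (rh - 1)) by (apply Rmult_le_pos; nra).
    nra.
Qed.
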